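(* Let $G$ be a finite simple graph on $n\geq 2$ vertices. Then $\mathrm{nRel}(G;p)$ is concave down for $p$ sufficiently close to $0$; that is, there is $\varepsilon>0$ such that $\frac{d^2}{dp^2}\mathrm{nRel}(G;p)<0$ for all $p\in(0,\varepsilon)$.
   Context: For a graph $G$ on $n$ vertices, a connected set is a nonempty vertex subset $C$ such that the induced subgraph $G[C]$ is connected. The node reliability of $G$ is the polynomial \[ \mathrm{nRel}(G;p)=\sum_{C}p^{|C|}(1-p)^{n-|C|}, \] the sum over all connected sets $C$ of $G$. *)

From mathcomp Require Import all_boot all_order all_algebra.
From mathcomp Require Import reals.
Set Implicit Arguments. Unset Strict Implicit. Unset Printing Implicit Defensive.
Import Order.TTheory GRing.Theory Num.Theory.

Definition simple_graph (T : finType) (e : rel T) : Prop :=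
  symmetric e /\ irreflexive e.

Definition induced_rel (T : finType) (e : rel T) (C : {set T}) : rel T :=
  [rel x y | [&& x \in C, y \in C & e x y]].

Definition connected_set (T : finType) (e : rel T) (C : {set T}) : bool :=
  (C != set0) &&
  [forall x in C, forall y in C, connect (induced_rel e C) x y].

Local Open Scope ring_scope.

Definition nRel (R : nzRingType) (T : finType) (e : rel T) : {poly R} :=
  \sum_(C : {set T} | connected_set e C)
     ('X ^+ #|C| * (1 - 'X) ^+ (#|T| - #|C|)%N).

(* The second derivative of nRel(G) at 0 is twice its coefficient of p^2.
   A connected set C contributes p^|C| (1-p)^(n-|C|), whose p^2-coefficient
   is 1 if |C| = 2, -(n-1) if |C| = 1 and 0 otherwise.  All n singletons are
   connected and there are at most C(n,2) connected pairs, so the coefficient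
   is at most C(n,2) - n(n-1) < 0 for n >= 2, and a polynomial that is
   negative at 0 stays negative near 0. *)

From mathcomp Require Import all_boot all_order all_algebra.
From mathcomp Require Import reals.
Set Implicit Arguments. Unset Strict Implicit. Unset Printing Implicit Defensive.
Import Order.TTheory GRing.Theory Num.Theory.
Local Open Scope ring_scope.

Lemma horner_bounded_unit_ball (R : realFieldType) (q : {poly R}) :
  exists M : R, 0 <= M /\ forall p, `|p| <= 1 -> `|q.[p]| <= M.
Proof.
elim/poly_ind: q => [|q c [M [M_ge0 qM]]].
  by exists 0; split=> // p _; rewrite horner0 normr0.
exists (M + `|c|); split=> [|p p_le1]; first by rewrite addr_ge0.
rewrite hornerMXaddC; apply: le_trans (ler_normD _ _) _.
rewrite lerD2r normrM -[M]mulr1.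
exact: ler_pM (qM p p_le1) p_le1.
Qed.

Lemma poly_mulX_addC0 (R : nzRingType) (q : {poly R}) :
  exists q', q = q' * 'X + q.[0]%:P.
Proof.
elim/poly_ind: q => [|q c _]; first by exists 0; rewrite mul0r add0r horner0.
by exists q; rewrite hornerMXaddC mulr0 add0r.
Qed.

Lemma horner_lt0_near0 (R : realFieldType) (q : {poly R}) : q.[0] < 0 ->
  exists2 eps : R, 0 < eps & forall p, `|p| < eps -> q.[p] < 0.
Proof.
move=> q0_lt0; have [q' ->] := poly_mulX_addC0 q.
have [M [M_ge0 q'M]] := horner_bounded_unit_ball q'.
set c := q.[0] in q0_lt0 *.
have M1_gt0 : 0 < M + 1 by rewrite ltr_wpDl.
exists (Num.min 1 (- c / (M + 1))).
  by rewrite lt_min ltr01 divr_gt0 // oppr_gt0.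
move=> p; rewrite lt_min => /andP[/ltW p_le1 p_small].
rewrite hornerMXaddC -ltrBrDr sub0r.
have Mp_lt : (M + 1) * `|p| < - c by rewrite mulrC -ltr_pdivlMr.
apply: le_lt_trans Mp_lt; apply: le_trans (ler_norm _) _.
by rewrite normrM ler_pM // ?(le_trans (q'M p p_le1)) // lerDl ler01.
Qed.

Lemma coef0_1subX_exp (R : nzRingType) (j : nat) :
  ((1 - 'X : {poly R}) ^+ j)`_0 = 1.
Proof.
elim: j => [|j IHj]; first by rewrite expr0 coef1.
by rewrite exprSr mulrBr mulr1 coefB coefMX subr0.
Qed.

Lemma coef1_1subX_exp (R : nzRingType) (j : nat) :
  ((1 - 'X : {poly R}) ^+ j)`_1 = - j%:R.
Proof.
elim: j => [|j IHj]; first by rewrite expr0 coef1 oppr0.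
rewrite exprSr mulrBr mulr1 coefB coefMX /= IHj coef0_1subX_exp.
by rewrite -opprD -(natr1 j) addrC.
Qed.

Lemma coef2_Xn_1subX_exp (R : nzRingType) (k j : nat) : (0 < k)%N ->
  ('X ^+ k * (1 - 'X : {poly R}) ^+ j)`_2 =
  if k == 2%N then 1 else if k == 1%N then - j%:R else 0.
Proof.
rewrite coefXnM; case: k => [|[|[|k]]] //= _.
  by rewrite coef1_1subX_exp.
by rewrite subnn coef0_1subX_exp.
Qed.

Lemma connected_set1 (T : finType) (e : rel T) (x : T) :
  connected_set e [set x].
Proof.
apply/andP; split; first by apply/set0Pn; exists x; rewrite inE.
by apply/forall_inP => y /set1P ->; apply/forall_inP => z /set1P ->.
Qed.

Lemma sum_card_eq (R : nzRingType) (T : finType) (k : nat) :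
  \sum_(C : {set T}) ((#|C| == k)%:R : R) = 'C(#|T|, k)%:R.
Proof.
rewrite -card_draws -sum1_card natr_sum [RHS]big_mkcond.
by apply: eq_bigr => C _; rewrite inE; case: (_ == _).
Qed.

Lemma coef2_nRel (R : nzRingType) (T : finType) (e : rel T) :
  (nRel R e)`_2 = \sum_(C | connected_set e C)
    ((#|C| == 2%N)%:R - (#|T|.-1)%:R * (#|C| == 1%N)%:R).
Proof.
rewrite coef_sum; apply: eq_bigr => C /andP[C_neq0 _].
rewrite coef2_Xn_1subX_exp ?card_gt0 //.
case: eqP => [->|_]; first by rewrite mulr0 subr0.
case: eqP => [->|_]; last by rewrite mulr0 subr0.
by rewrite mulr1 sub0r subn1.
Qed.

Lemma coef2_nRel_lt0 (R : realDomainType) (T : finType) (e : rel T) :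
  (2 <= #|T|)%N -> (nRel R e)`_2 < 0.
Proof.
move=> n_ge2; set n := #|T|.
pose g (C : {set T}) : R := (#|C| == 2%N)%:R - (n.-1)%:R * (#|C| == 1%N)%:R.
have g_ge0_disconnected C : ~~ connected_set e C -> 0 <= g C.
  rewrite /g; case: (boolP (#|C| == 1%N)) => [/cards1P[x ->]|_].
    by rewrite connected_set1.
  by rewrite mulr0 subr0 ler0n.
have sum_conn_le : \sum_(C | connected_set e C) g C <= \sum_C g C.
  by rewrite [leRHS](bigID (connected_set e)) lerDl sumr_ge0.
have sum_g : \sum_C g C = 'C(n, 2)%:R - (n.-1 * n)%:R.
  by rewrite sumrB -mulr_sumr !sum_card_eq bin1 natrM.
rewrite coef2_nRel; apply: le_lt_trans sum_conn_le _.
rewrite sum_g subr_lt0 ltr_nat bin2 ltn_half_double -mul2n mulnC ltn_Pmull //.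
by rewrite muln_gt0 /n; case: #|T| n_ge2 => [|[|]].
Qed.

Theorem lemma3p1 (R : realType) (T : finType) (e : rel T) :
  simple_graph e -> (2 <= #|T|)%N ->
  exists2 eps : R, 0 < eps &
    forall p : R, 0 < p -> p < eps -> ((nRel R e)^`(2)).[p] < 0.
Proof.
move=> _ n_ge2.
have d2_at0 : ((nRel R e)^`(2)).[0] < 0.
  rewrite horner_coef0 coef_derivn addn0 -mulr_natr pmulr_llt0 //.
  exact: coef2_nRel_lt0.
have [eps eps_gt0 d2_near0] := horner_lt0_near0 d2_at0.
by exists eps => // p p_gt0 p_lt; apply: d2_near0; rewrite gtr0_norm.
Qed.
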